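(* Let $N\ge 2$ be an integer and let $\boldsymbol{A}=(A_1,\dots,A_N)$ and $\boldsymbol{B}=(B_1,\dots,B_N)$ be probability vectors, i.e. $A_i\ge 0$, $B_i\ge 0$ for all $i$ and $\sum_{i=1}^N A_i=\sum_{i=1}^N B_i=1$. For $i=1,\dots,N$ put $S_i=A_i+B_i$. Suppose $S_i\le 1$ for all $i=1,\dots,N$. Then $L_{\min}=0$; that is, there exists a joint selection probability matrix $\boldsymbol{P}=(p_{i,j})_{i,j=1}^N$ with $$L(\boldsymbol{P})=\sum_{i=1}^N\Big(\sum_{j=1}^N p_{i,j}-A_i\Big)^2+\sum_{j=1}^N\Big(\sum_{i=1}^N p_{i,j}-B_j\Big)^2=0,$$ i.e. with $\sum_j p_{i,j}=A_i$ for all $i$ and $\sum_i p_{i,j}=B_j$ for all $j$.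
   Context: A joint selection probability matrix is an $N\times N$ real matrix $\boldsymbol{P}=(p_{i,j})$ with $p_{i,i}=0$ for all $i$, $p_{i,j}\ge 0$ for all $i,j$, and $\sum_{i,j}p_{i,j}=1$ (entry $p_{i,j}$ is the probability that player A selects arm $i$ and player B selects arm $j$). The satisfied preferences are $\pi_A(i)=\sum_j p_{i,j}$ and $\pi_B(j)=\sum_i p_{i,j}$, the loss is $L=\sum_i(\pi_A(i)-A_i)^2+\sum_j(\pi_B(j)-B_j)^2$, and $L_{\min}$ is the minimum of $L$ over all joint selection probability matrices. $S_i=A_i+B_i$ is called the popularity of arm $i$. *)

From mathcomp Require Import all_boot all_order all_algebra.
From mathcomp Require Import reals.
Set Implicit Arguments. Unset Strict Implicit. Unset Printing Implicit Defensive.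
Import Order.TTheory GRing.Theory Num.Theory.
Local Open Scope ring_scope.

Definition prob_vec (R : realType) (N : nat) (A : 'I_N -> R) : Prop :=
  (forall i, 0 <= A i) /\ \sum_(i < N) A i = 1.

Definition joint_sel_matrix (R : realType) (N : nat) (P : 'M[R]_N) : Prop :=
  (forall i, P i i = 0) /\ (forall i j, 0 <= P i j) /\
  \sum_(i < N) \sum_(j < N) P i j = 1.

Definition piA (R : realType) (N : nat) (P : 'M[R]_N) (i : 'I_N) : R :=
  \sum_(j < N) P i j.
Definition piB (R : realType) (N : nat) (P : 'M[R]_N) (j : 'I_N) : R :=
  \sum_(i < N) P i j.

Definition loss (R : realType) (N : nat) (A B : 'I_N -> R) (P : 'M[R]_N) : R :=
  \sum_(i < N) (piA P i - A i) ^+ 2 + \sum_(j < N) (piB P j - B j) ^+ 2.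

From mathcomp Require Import all_boot all_order all_algebra.
From mathcomp Require Import reals.
From mathcomp Require Import ring lra.
Set Implicit Arguments. Unset Strict Implicit. Unset Printing Implicit Defensive.
Import Order.TTheory GRing.Theory Num.Theory.
Local Open Scope ring_scope.

(* The required matrix is the off-diagonal part of
   [p_ij = t A_i B_j + g_i B_j + A_i g_j], normalised by [t + sum_k g_k].
   Row i of the full matrix sums to [t A_i + g_i + A_i sum_k g_k] and its
   diagonal entry is [t A_i B_i + g_i (A_i + B_i)], so off the diagonal row i
   sums to a multiple of A_i (and column j to the same multiple of
   B_j) as soon as [g_i (1 - S_i) = t A_i B_i] for every i.  If every arm is
   unsaturated ([S_i < 1]) take [t = 1] and [g_i = A_i B_i / (1 - S_i)]; if
   some arm l has [S_l = 1] take [t = 0] and [g] the indicator of l, which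
   puts B on row l and A on column l. *)

Lemma sum_offdiag (V : zmodType) (n : nat) (F : 'I_n -> V) (i : 'I_n) :
  \sum_j (if i == j then 0 else F j) = \sum_j F j - F i.
Proof.
rewrite [in RHS](bigD1 i) //= (bigD1 i) //= eqxx add0r addrAC subrr add0r.
by apply: eq_bigr => j; rewrite eq_sym => /negbTE ->.
Qed.

Lemma piB_tr (R : realType) (N : nat) (P : 'M[R]_N) (j : 'I_N) :
  piB P j = piA P^T j.
Proof. by apply: eq_bigr => i _; rewrite mxE. Qed.

Lemma loss_eq0 (R : realType) (N : nat) (A B : 'I_N -> R) (P : 'M[R]_N) :
  (forall i, piA P i = A i) -> (forall j, piB P j = B j) -> loss A B P = 0.
Proof.
move=> PA PB; rewrite /loss !big1 ?addr0 // => i _.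
- by rewrite PB subrr expr0n.
- by rewrite PA subrr expr0n.
Qed.

Lemma joint_sel_matrix_margins (R : realType) (N : nat) (A : 'I_N -> R)
    (P : 'M[R]_N) :
  (forall i, P i i = 0) -> (forall i j, 0 <= P i j) ->
  (forall i, piA P i = A i) -> \sum_i A i = 1 -> joint_sel_matrix P.
Proof.
move=> P0 Pge0 PA sA; do 2!split => //.
by rewrite -sA; apply: eq_bigr => i _; exact: PA.
Qed.

Section OffdiagCoupling.
Variables (R : realType) (N : nat) (A B g : 'I_N -> R) (t : R).

Definition offdiag_coupling : 'M[R]_N :=
  \matrix_(i, j)
    ((if i == j then 0 else t * A i * B j + g i * B j + A i * g j)
     / (t + \sum_k g k)).

Lemma offdiag_coupling_diag i : offdiag_coupling i i = 0.
Proof. by rewrite mxE eqxx mul0r. Qed.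

Lemma offdiag_coupling_ge0 :
  0 <= t -> (forall i, 0 <= g i) -> (forall i, 0 <= A i) ->
  (forall j, 0 <= B j) -> forall i j, 0 <= offdiag_coupling i j.
Proof.
move=> t0 g0 A0 B0 i j; rewrite mxE; apply: divr_ge0.
  by case: eqP => // _; rewrite !addr_ge0 // !mulr_ge0.
by rewrite addr_ge0 // sumr_ge0.
Qed.

Hypothesis balanced : forall i, g i * (1 - (A i + B i)) = t * (A i * B i).
Hypothesis total_neq0 : t + \sum_k g k != 0.

Lemma piA_offdiag_coupling : \sum_j B j = 1 ->
  forall i, piA offdiag_coupling i = A i.
Proof.
move=> sB i; rewrite /piA; under eq_bigr do rewrite mxE.
rewrite -mulr_suml sum_offdiag !big_split /= -!mulr_sumr sB !mulr1.
apply: (canLR (mulfK total_neq0)).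
have := balanced i; lra.
Qed.

End OffdiagCoupling.

Lemma offdiag_coupling_tr (R : realType) (N : nat) (A B g : 'I_N -> R) t :
  (offdiag_coupling A B g t)^T = offdiag_coupling B A g t.
Proof.
apply/matrixP => i j; rewrite !mxE eq_sym.
by case: eqP => // _; congr (_ / _); ring.
Qed.

Lemma piB_offdiag_coupling (R : realType) (N : nat) (A B g : 'I_N -> R) t :
  (forall i, g i * (1 - (A i + B i)) = t * (A i * B i)) ->
  t + \sum_k g k != 0 -> \sum_i A i = 1 ->
  forall j, piB (offdiag_coupling A B g t) j = B j.
Proof.
move=> balanced total_neq0 sA j.
rewrite piB_tr offdiag_coupling_tr piA_offdiag_coupling // => i.
by rewrite [B i + _]addrC [B i * _]mulrC.
Qed.

Lemma coupling_weights_exist (R : realType) (N : nat) (A B : 'I_N -> R) :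
  prob_vec A -> prob_vec B -> (forall i, A i + B i <= 1) ->
  exists t (g : 'I_N -> R), [/\ 0 <= t, forall i, 0 <= g i,
    forall i, g i * (1 - (A i + B i)) = t * (A i * B i)
    & t + \sum_k g k != 0].
Proof.
move=> [A0 _] [B0 _] S1.
case: (pickP (fun l => A l + B l == 1)) => [l /eqP Sl | unsaturated].
  exists 0, (fun i => if i == l then 1 else 0); split => //.
  - by move=> i; case: eqP.
  - move=> i; rewrite mul0r.
    by case: eqVneq => [->|_]; rewrite ?Sl ?subrr ?mul0r ?mulr0.
  - by rewrite add0r -big_mkcond big_pred1_eq oner_neq0.
have d_neq0 i : 1 - (A i + B i) != 0 by rewrite subr_eq0 eq_sym unsaturated.
pose g i := A i * B i / (1 - (A i + B i)).
have g0 i : 0 <= g i by rewrite divr_ge0 ?mulr_ge0 // subr_ge0.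
exists 1, g; split => //.
- by move=> i; rewrite divfK // mul1r.
- by rewrite lt0r_neq0 // ltr_wpDr ?sumr_ge0.
Qed.

Theorem theorem2p1 (R : realType) (N : nat) (A B : 'I_N -> R) :
  (2 <= N)%N -> prob_vec A -> prob_vec B ->
  (forall i, A i + B i <= 1) ->
  exists P : 'M[R]_N, joint_sel_matrix P /\ loss A B P = 0 /\
    (forall i, piA P i = A i) /\ (forall j, piB P j = B j).
Proof.
move=> _ pA pB S1.
have [t [g [t0 g0 balanced total_neq0]]] := coupling_weights_exist pA pB S1.
move: pA pB => [A0 sA] [B0 sB].
pose P := offdiag_coupling A B g t.
have PA : forall i, piA P i = A i by exact: piA_offdiag_coupling.
have PB : forall j, piB P j = B j by exact: piB_offdiag_coupling.
exists P; split; last by split; [exact: loss_eq0|].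
apply: joint_sel_matrix_margins PA sA.
- exact: offdiag_coupling_diag.
- exact: offdiag_coupling_ge0.
Qed.
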